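(* Let $X,Z\in\mathbb{R}^{n\times r}$ with $XX^{T}\ne ZZ^{T}$, and let $r^{\star}=\mathrm{rank}(Z)$ with $1\le r^{\star}\le r$. Let $Z_{\perp}=(I-XX^{\dagger})Z$, $$\alpha=\frac{\|Z_{\perp}Z_{\perp}^{T}\|_{F}}{\|XX^{T}-ZZ^{T}\|_{F}},\qquad\beta=\frac{\sigma_{\min}^{2}(X)}{\|XX^{T}-ZZ^{T}\|_{F}}\cdot\frac{\mathrm{tr}(Z_{\perp}Z_{\perp}^{T})}{\|Z_{\perp}Z_{\perp}^{T}\|_{F}}.$$ Then: (1) if $\beta\le\alpha$, then $\alpha^{2}+(r/r^{\star})\beta^{2}\le1$; (2) if $\beta\ge\alpha$, then $\alpha\le1/\sqrt{1+r/r^{\star}}$.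
   Context: $A^{\dagger}$ is the Moore–Penrose pseudoinverse and $\sigma_{\min}(X)$ the $r$-th singular value of $X$. When $Z_{\perp}=0$, $\beta$ may be taken as $\sigma_{\min}^{2}(X)/\|XX^{T}-ZZ^{T}\|_{F}$. *)

From HB Require Import structures.
From mathcomp Require Import all_boot all_order all_algebra.
From mathcomp Require Import all_classical all_reals.
Set Implicit Arguments. Unset Strict Implicit. Unset Printing Implicit Defensive.
Import Order.TTheory GRing.Theory Num.Theory.
Local Open Scope ring_scope.
Local Open Scope classical_set_scope.

Definition frob (R : realType) (m n : nat) (A : 'M[R]_(m, n)) : R :=
  Num.sqrt (\sum_(i < m) \sum_(j < n) A i j ^+ 2).

(* Moore-Penrose pseudoinverse: Xd is THE pseudoinverse of X iff it
   satisfies the four Penrose equations (these characterize it uniquely). *)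
Definition is_pinv (R : realType) (n r : nat)
    (X : 'M[R]_(n, r)) (Xd : 'M[R]_(r, n)) : Prop :=
  [/\ X *m Xd *m X = X, Xd *m X *m Xd = Xd,
      (X *m Xd)^T = X *m Xd & (Xd *m X)^T = Xd *m X].

(* Square of the r-th singular value of X : 'M_(n, r): the smallest
   eigenvalue of the r x r matrix X^T X (counting zero eigenvalues). *)
Definition sigma_min_sq (R : realType) (n r : nat) (X : 'M[R]_(n, r)) : R :=
  inf [set a : R | eigenvalue (X^T *m X) a].

(* alpha and beta of the paper; Zp = Z_perp, D = XX^T - ZZ^T.
   When Z_perp = 0, beta is taken as sigma_min^2(X)/||D||_F (per context). *)
Definition alpha_of (R : realType) (n r : nat) (X Z : 'M[R]_(n, r))
    (Zp : 'M[R]_(n, r)) : R :=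
  frob (Zp *m Zp^T) / frob (X *m X^T - Z *m Z^T).

Definition beta_of (R : realType) (n r : nat) (X Z : 'M[R]_(n, r))
    (Zp : 'M[R]_(n, r)) : R :=
  if Zp == 0 then sigma_min_sq X / frob (X *m X^T - Z *m Z^T)
  else sigma_min_sq X / frob (X *m X^T - Z *m Z^T)
       * (\tr (Zp *m Zp^T) / frob (Zp *m Zp^T)).

From HB Require Import structures.
From mathcomp Require Import all_boot all_order all_algebra.
From mathcomp Require Import all_classical all_reals.
From mathcomp Require Import ring lra.
Import Order.TTheory GRing.Theory Num.Theory.
Local Open Scope ring_scope.
Set Implicit Arguments. Unset Strict Implicit. Unset Printing Implicit Defensive.

(* With P = X X^+ the orthogonal projector onto col(X), Q = I - P, Pi the
   projector onto col(Z), s = sigma_min^2(X), D = X X^T - Z Z^T and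
   M = Z_perp Z_perp^T = Q Z Z^T Q: splitting D along P and Q gives
   ||D||^2 = ||P D||^2 + ||Q Z Z^T||^2, and ||P D|| >= ||X X^T (I - Pi)||
   >= s ||(I - Pi) P|| because s bounds X X^T from below on col(X).
   Bounding the cross term <s Q Pi, lam Q Z Z^T> = s lam tr M by AM-GM then
   yields, for every lam in [0, 1],
     ||M||^2 + s^2 (r - rank Z) + 2 lam s tr M - lam^2 ||M||^2 <= ||D||^2,
   using tr P = r when s > 0 and tr Pi = rank Z.  Together with
   (tr M)^2 <= rank Z ||M||^2 (Cauchy-Schwarz against the projector onto the row
   space of Z) and division by ||D||^2 this reads
     alpha^2 (1 - lam^2) + 2 lam alpha beta + (r / rank Z - 1) beta^2 <= 1;
   choose lam = beta / alpha when beta <= alpha and lam = 1 otherwise. *)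

Section FrobeniusInnerProduct.
Variable R : realFieldType.
Implicit Types m n : nat.

Definition frobdot m n (A B : 'M[R]_(m, n)) : R := \tr (A *m B^T).
Definition frob2 m n (A : 'M[R]_(m, n)) : R := frobdot A A.

Lemma frobdotE m n (A B : 'M[R]_(m, n)) :
  frobdot A B = \sum_i \sum_j A i j * B i j.
Proof.
rewrite /frobdot /mxtrace; apply: eq_bigr => i _; rewrite !mxE.
by apply: eq_bigr => j _; rewrite mxE.
Qed.

Lemma frob2E m n (A : 'M[R]_(m, n)) : frob2 A = \sum_i \sum_j A i j ^+ 2.
Proof.
by rewrite /frob2 frobdotE; apply: eq_bigr => i _; apply: eq_bigr => j _; rewrite expr2.
Qed.

Lemma frob20 m n : frob2 (0 : 'M[R]_(m, n)) = 0.
Proof. by rewrite /frob2 /frobdot mul0mx mxtrace0. Qed.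

Lemma frob2_ge0 m n (A : 'M[R]_(m, n)) : 0 <= frob2 A.
Proof. by rewrite frob2E; do 2![apply: sumr_ge0 => ? _]; apply: sqr_ge0. Qed.

Lemma frob2_eq0 m n (A : 'M[R]_(m, n)) : (frob2 A == 0) = (A == 0).
Proof.
apply/eqP/eqP => [|->]; last exact: frob20.
rewrite frob2E => /eqP; rewrite psumr_eq0; last first.
  by move=> i _; apply: sumr_ge0 => j _; apply: sqr_ge0.
move=> /allP A0; apply/matrixP => i j; rewrite mxE.
move: (A0 i (mem_index_enum i)); rewrite implyTb psumr_eq0; last first.
  by move=> k _; apply: sqr_ge0.
by move=> /allP /(_ j (mem_index_enum j)); rewrite implyTb sqrf_eq0 => /eqP.
Qed.

Lemma frob2_gt0 m n (A : 'M[R]_(m, n)) : (0 < frob2 A) = (A != 0).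
Proof. by rewrite lt_def frob2_eq0 frob2_ge0 andbT. Qed.

Lemma frobdotC m n (A B : 'M[R]_(m, n)) : frobdot A B = frobdot B A.
Proof. by rewrite /frobdot -mxtrace_tr trmx_mul trmxK. Qed.

Lemma frobdotDl m n (A B C : 'M[R]_(m, n)) :
  frobdot (A + B) C = frobdot A C + frobdot B C.
Proof. by rewrite /frobdot mulmxDl mxtraceD. Qed.

Lemma frobdotNl m n (A C : 'M[R]_(m, n)) : frobdot (- A) C = - frobdot A C.
Proof. by rewrite /frobdot mulNmx raddfN. Qed.

Lemma frobdotZl m n a (A C : 'M[R]_(m, n)) : frobdot (a *: A) C = a * frobdot A C.
Proof. by rewrite /frobdot -scalemxAl mxtraceZ. Qed.

Lemma frobdotDr m n (A B C : 'M[R]_(m, n)) :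
  frobdot C (A + B) = frobdot C A + frobdot C B.
Proof. by rewrite frobdotC frobdotDl !(frobdotC C). Qed.

Lemma frobdotNr m n (A C : 'M[R]_(m, n)) : frobdot C (- A) = - frobdot C A.
Proof. by rewrite frobdotC frobdotNl frobdotC. Qed.

Lemma frobdotZr m n a (A C : 'M[R]_(m, n)) : frobdot C (a *: A) = a * frobdot C A.
Proof. by rewrite frobdotC frobdotZl frobdotC. Qed.

Lemma frob2B m n (A B : 'M[R]_(m, n)) :
  frob2 (A - B) = frob2 A - 2 * frobdot A B + frob2 B.
Proof.
rewrite /frob2 frobdotDl !frobdotDr !frobdotNl !frobdotNr (frobdotC B A); ring.
Qed.

Lemma frob2Z m n a (A : 'M[R]_(m, n)) : frob2 (a *: A) = a ^+ 2 * frob2 A.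
Proof. by rewrite /frob2 frobdotZl frobdotZr mulrA expr2. Qed.

Lemma frob2N m n (A : 'M[R]_(m, n)) : frob2 (- A) = frob2 A.
Proof. by rewrite /frob2 frobdotNl frobdotNr opprK. Qed.

Lemma frob2_tr m n (A : 'M[R]_(m, n)) : frob2 A^T = frob2 A.
Proof. by rewrite /frob2 /frobdot trmxK mxtrace_mulC. Qed.

Lemma frob2_rows m n (A : 'M[R]_(m, n)) : frob2 A = \sum_i frob2 (row i A).
Proof.
rewrite frob2E; apply: eq_bigr => i _; rewrite frob2E big_ord1.
by apply: eq_bigr => j _; rewrite mxE.
Qed.

Lemma frobdot_le m n (A B : 'M[R]_(m, n)) : 2 * frobdot A B <= frob2 A + frob2 B.
Proof. by have := frob2_ge0 (A - B); rewrite frob2B; lra. Qed.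

Lemma frobdot_sqr_le m n (A B : 'M[R]_(m, n)) : frobdot A B ^+ 2 <= frob2 A * frob2 B.
Proof.
have [->|A_neq0] := eqVneq A 0.
  by rewrite frob20 /frobdot mul0mx mxtrace0 expr0n mul0r.
have A_gt0 : 0 < frob2 A by rewrite frob2_gt0.
have := frob2_ge0 (frob2 A *: B - frobdot A B *: A).
rewrite frob2B !frob2Z frobdotZl frobdotZr (frobdotC B A) => h.
have : 0 <= frob2 A * (frob2 A * frob2 B - frobdot A B ^+ 2).
  by move: h; rewrite /frob2; nra.
by rewrite pmulr_rge0 // subr_ge0.
Qed.

Lemma frob2_gram_tr m n (A : 'M[R]_(m, n)) : frob2 (A *m A^T) = frob2 (A^T *m A).
Proof. by rewrite /frob2 /frobdot !trmx_mul trmxK !mulmxA mxtrace_mulC !mulmxA. Qed.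

Lemma frob2_gram_gt0 m n (A : 'M[R]_(m, n)) : (0 < frob2 (A *m A^T)) = (A != 0).
Proof.
rewrite frob2_gt0; congr negb; apply/eqP/eqP => [AA0|->]; last by rewrite mul0mx.
by apply/eqP; rewrite -frob2_eq0 /frob2 /frobdot AA0 mxtrace0.
Qed.

End FrobeniusInnerProduct.

Lemma frobE (R : realType) m n (A : 'M[R]_(m, n)) : frob A = Num.sqrt (frob2 A).
Proof. by rewrite /frob frob2E. Qed.

Lemma rank_factorization (F : fieldType) n r (Z : 'M[F]_(n, r)) :
  exists (L : 'M[F]_(n, \rank Z)) (B : 'M[F]_(\rank Z, r)),
    [/\ Z = L *m B, row_free L^T & row_free B].
Proof.
set L := Z *m pinvmx (row_base Z).
have ZE : Z = L *m row_base Z by rewrite mulmxKpV // eq_row_base.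
exists L, (row_base Z); split => //; last exact: row_base_free.
by rewrite -row_leq_rank mxrank_tr; have := mxrankM_maxl L (row_base Z); rewrite -ZE.
Qed.

Section OrthogonalProjection.
Variable R : realFieldType.

Definition orthoproj n (P : 'M[R]_n) := P^T = P /\ P *m P = P.

Lemma orthoprojC n (P : 'M[R]_n) : orthoproj P -> orthoproj (1%:M - P).
Proof.
move=> [PT PP]; split; first by rewrite raddfB /= trmx1 PT.
by rewrite mulmxBl mul1mx mulmxBr mulmx1 PP subrr subr0.
Qed.

Lemma frob2_orthoprojl n m (P : 'M[R]_n) (A : 'M[R]_(n, m)) : orthoproj P ->
  frob2 A = frob2 (P *m A) + frob2 ((1%:M - P) *m A).
Proof.
move=> P_proj; have [QT QQ] := orthoprojC P_proj; move: P_proj => [PT PP].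
have trE (B : 'M[R]_n) : B^T = B -> B *m B = B ->
    frob2 (B *m A) = \tr (A^T *m B *m A).
  move=> BT BB; rewrite /frob2 /frobdot trmx_mul BT mxtrace_mulC !mulmxA.
  by rewrite -(mulmxA _ B B) BB.
rewrite trE // trE // -mxtraceD -mulmxDl -mulmxDr addrC subrK mulmx1.
by rewrite /frob2 /frobdot mxtrace_mulC.
Qed.

Lemma frob2_orthoprojr n m (P : 'M[R]_m) (A : 'M[R]_(n, m)) : orthoproj P ->
  frob2 A = frob2 (A *m P) + frob2 (A *m (1%:M - P)).
Proof.
move=> P_proj; have [QT _] := orthoprojC P_proj; have [PT _] := P_proj.
rewrite -frob2_tr (frob2_orthoprojl _ P_proj) -(frob2_tr (A *m P)).
by rewrite -(frob2_tr (A *m (1%:M - P))) !trmx_mul PT QT.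
Qed.

Lemma frob2_orthoprojM n (P Q : 'M[R]_n) : orthoproj P -> orthoproj Q ->
  frob2 (P *m Q) = \tr (P *m Q).
Proof.
move=> [PT PP] [QT QQ]; rewrite /frob2 /frobdot trmx_mul PT QT mulmxA.
by rewrite -(mulmxA P Q Q) QQ mxtrace_mulC mulmxA PP.
Qed.

Lemma mxtrace_gram_sqr_le n r (A : 'M[R]_(n, r)) (P : 'M[R]_r) :
  orthoproj P -> A *m P = A -> \tr (A *m A^T) ^+ 2 <= \tr P * frob2 (A *m A^T).
Proof.
move=> [PT PP] AP.
have trE : \tr (A *m A^T) = frobdot (A^T *m A) P.
  by rewrite /frobdot PT -mulmxA AP mxtrace_mulC.
have frobP : frob2 P = \tr P by rewrite /frob2 /frobdot PT PP.
by rewrite trE frob2_gram_tr -frobP mulrC frobdot_sqr_le.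
Qed.

Lemma orthoproj_onto_cols m k (F : 'M[R]_(m, k)) : row_free F^T ->
  exists Pi : 'M[R]_m, [/\ orthoproj Pi, Pi *m F = F & \tr Pi = k%:R].
Proof.
move=> F_free; set G := F^T *m F.
have GT : G^T = G by rewrite /G trmx_mul trmxK.
have G_unit : G \in unitmx.
  rewrite -row_free_unit; apply: inj_row_free => v vG0.
  apply: (row_free_inj F_free); apply/eqP; rewrite mul0mx -frob2_eq0.
  by rewrite /frob2 /frobdot trmx_mul trmxK !mulmxA -(mulmxA v) vG0 mul0mx mxtrace0.
have GiT : (invmx G)^T = invmx G by rewrite trmx_inv GT.
have GiG : invmx G *m G = 1%:M by rewrite mulVmx.
exists (F *m invmx G *m F^T); split.
- split; first by rewrite !trmx_mul trmxK GiT mulmxA.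
  by rewrite -!mulmxA (mulmxA F^T) (mulmxA _ G) GiG mul1mx.
- by rewrite -!mulmxA GiG mulmx1.
- by rewrite mxtrace_mulC mulmxA mulmxV // mxtrace1.
Qed.

Lemma orthoprojs_col_row_spaces n r (Z : 'M[R]_(n, r)) : exists Pi Pr,
  [/\ orthoproj Pi, Pi *m Z = Z & \tr Pi = (\rank Z)%:R] /\
  [/\ orthoproj Pr, Z *m Pr = Z & \tr Pr = (\rank Z)%:R].
Proof.
have [L [B [ZE L_free B_free]]] := rank_factorization Z.
have [Pi [Pi_proj PiL trPi]] := orthoproj_onto_cols L_free.
have BTT_free : row_free (B^T)^T by rewrite trmxK.
have [Pr [Pr_proj PrB trPr]] := orthoproj_onto_cols BTT_free.
have BPr : B *m Pr = B by rewrite -[LHS]trmxK trmx_mul Pr_proj.1 PrB trmxK.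
by exists Pi, Pr; split; split; rewrite // ZE ?mulmxA ?PiL // -mulmxA BPr.
Qed.

End OrthogonalProjection.

Section QuadraticForm.
Variables (R : realFieldType) (r : nat).

Lemma norm_mul_entries_le (v : 'rV[R]_r) i j : `|v 0 i * v 0 j| <= frob2 v.
Proof.
have entry_le k : v 0 k ^+ 2 <= frob2 v.
  rewrite frob2E big_ord1 (bigD1 k) //= lerDl.
  by apply: sumr_ge0 => l _; apply: sqr_ge0.
have := entry_le i; have := entry_le j; have := sqr_ge0 (`|v 0 i| - `|v 0 j|).
by rewrite normrM -(real_normK (num_real (v 0 i))) -(real_normK (num_real (v 0 j))); nra.
Qed.

Lemma quad_form_le (B : 'M[R]_r) (v : 'rV[R]_r) :
  frobdot (v *m B) v <= (\sum_i \sum_j `|B i j|) * frob2 v.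
Proof.
rewrite frobdotE big_ord1.
apply: (le_trans (ler_norm _)); apply: (le_trans (ler_norm_sum _ _ _)).
rewrite (exchange_big _ _ _ _ _ (fun i j => `|B i j|)) /= mulr_suml.
apply: ler_sum => j _; rewrite mxE mulr_suml [X in _ <= X]mulr_suml.
apply: (le_trans (ler_norm_sum _ _ _)); apply: ler_sum => k _.
rewrite normrM normrM mulrAC -normrM mulrC.
by apply: ler_wpM2l => //; apply: norm_mul_entries_le.
Qed.

Lemma psd_unitmx_coercive (A : 'M[R]_r) : A^T = A -> A \in unitmx ->
    (forall x : 'rV_r, 0 <= frobdot (x *m A) x) ->
  exists2 d, 0 < d & forall v : 'rV_r, d * frob2 v <= frobdot (v *m A) v.
Proof.
move=> AT A_unit A_psd; set B := invmx A; set K := \sum_i \sum_j `|B i j|.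
have BT : B^T = B by rewrite /B trmx_inv AT.
have BA : B *m A = 1%:M by rewrite mulVmx.
have K_ge0 : 0 <= K by do 2![apply: sumr_ge0 => ? _].
set t := K + 1; have t_gt0 : 0 < t by rewrite ltr_wpDl.
exists ((K + 2) / t ^+ 2) => [|v]; first by rewrite divr_gt0 ?exprn_gt0 ?ltr_wpDl.
have vBv : frobdot v (v *m B) = frobdot (v *m B) v.
  by rewrite /frobdot trmx_mul BT mulmxA.
have vAvB : frobdot (v *m A) (v *m B) = frob2 v.
  by rewrite frobdotC /frobdot trmx_mul AT -mulmxA (mulmxA B) BA mul1mx.
(* Positivity of the form at v A^-1 - t v gives t^2 q(v) >= (2 t - K) |v|^2. *)
have := A_psd (v *m B - t *: v).
rewrite mulmxBl -scalemxAl -mulmxA BA mulmx1.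
rewrite frobdotDl !frobdotDr !frobdotNl !frobdotNr !frobdotZl !frobdotZr vBv vAvB.
have := quad_form_le B v; rewrite -/K -/(frob2 v) mulrAC ler_pdivrMr ?exprn_gt0 //.
rewrite /t; nra.
Qed.

End QuadraticForm.

Section SmallestEigenvalue.
Variable R : realType.
Local Open Scope classical_set_scope.

Definition rayleigh r (G : 'M[R]_r) : set R :=
  [set frobdot (v *m G) v / frob2 v | v in [set v : 'rV[R]_r | v != 0]].

Lemma rayleigh_lbound r (G : 'M[R]_r) : has_lbound (rayleigh G).
Proof.
exists (- \sum_i \sum_j `|G i j|) => _ [v v_neq0 <-].
rewrite ler_pdivlMr ?frob2_gt0 // mulNr lerNl -frobdotNl -mulmxN.
rewrite (le_trans (quad_form_le _ _)) //; apply: ler_wpM2r; first exact: frob2_ge0.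
by apply/ler_sum => i _; apply/ler_sum => j _; rewrite mxE normrN.
Qed.

Lemma inf_rayleigh_le r (G : 'M[R]_r) (v : 'rV[R]_r) :
  inf (rayleigh G) * frob2 v <= frobdot (v *m G) v.
Proof.
have [->|v_neq0] := eqVneq v 0.
  by rewrite frob20 mulr0 /frobdot !mul0mx mxtrace0.
rewrite -ler_pdivlMr ?frob2_gt0 //.
by apply: ge_inf; [exact: rayleigh_lbound | exists v].
Qed.

Lemma inf_rayleigh_eigenvalue r (G : 'M[R]_r) : (0 < r)%N -> G^T = G ->
  eigenvalue G (inf (rayleigh G)).
Proof.
move=> r_gt0 GT; set c := inf (rayleigh G); apply: contraT => not_eig.
have A_unit : G - c%:M \in unitmx.
  move: not_eig; rewrite /eigenvalue /eigenspace negbK.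
  by rewrite -row_free_unit -kermx_eq0.
have AT : (G - c%:M)^T = G - c%:M by rewrite raddfB /= GT tr_scalar_mx.
have quadA (x : 'rV_r) :
    frobdot (x *m (G - c%:M)) x = frobdot (x *m G) x - c * frob2 x.
  by rewrite mulmxBr mul_mx_scalar frobdotDl frobdotNl frobdotZl.
have [d d_gt0 coercive] : exists2 d, 0 < d &
    forall v : 'rV_r, d * frob2 v <= frobdot (v *m (G - c%:M)) v.
  by apply: psd_unitmx_coercive => // x; rewrite quadA subr_ge0 inf_rayleigh_le.
have : c + d <= c.
  apply: lb_le_inf => [|_ [v v_neq0 <-]].
    have one_neq0 : const_mx 1 != 0 :> 'rV[R]_r.
      apply/eqP => /matrixP /(_ 0 (Ordinal r_gt0)) /eqP.
      by rewrite !mxE oner_eq0.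
    by eexists; exists (const_mx 1).
  rewrite ler_pdivlMr ?frob2_gt0 // mulrDl.
  by have := coercive v; rewrite quadA; lra.
by rewrite gerDl leNgt d_gt0.
Qed.

Lemma frob2_mul_tr n r (X : 'M[R]_(n, r)) (v : 'rV[R]_r) :
  frob2 (v *m X^T) = frobdot (v *m (X^T *m X)) v.
Proof. by rewrite /frob2 /frobdot trmx_mul trmxK !mulmxA. Qed.

Lemma gram_eigenvalue_ge0 n r (X : 'M[R]_(n, r)) a :
  eigenvalue (X^T *m X) a -> 0 <= a.
Proof.
move=> /eigenvalueP[v vG v_neq0].
have := frob2_ge0 (v *m X^T); rewrite frob2_mul_tr vG frobdotZl.
by rewrite pmulr_lge0 // frob2_gt0.
Qed.

Lemma sigma_min_sq_bounds n r (X : 'M[R]_(n, r)) : (0 < r)%N ->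
  0 <= sigma_min_sq X <= inf (rayleigh (X^T *m X)).
Proof.
move=> r_gt0; have GT : (X^T *m X)^T = X^T *m X by rewrite trmx_mul trmxK.
have eig := inf_rayleigh_eigenvalue r_gt0 GT.
have eig_lbound : lbound [set a | eigenvalue (X^T *m X) a] 0.
  by move=> a; apply: gram_eigenvalue_ge0.
apply/andP; split; first by apply: lb_le_inf => //; eexists; exact: eig.
by apply: ge_inf => //; exists 0.
Qed.

Lemma sigma_min_sq_ge0 n r (X : 'M[R]_(n, r)) : (0 < r)%N -> 0 <= sigma_min_sq X.
Proof. by move=> /(sigma_min_sq_bounds X) /andP[]. Qed.

Lemma sigma_min_sq_le n r (X : 'M[R]_(n, r)) (v : 'rV[R]_r) : (0 < r)%N ->
  sigma_min_sq X * frob2 v <= frob2 (v *m X^T).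
Proof.
move=> /(sigma_min_sq_bounds X) /andP[_ le_inf].
rewrite frob2_mul_tr; apply: le_trans (inf_rayleigh_le _ v).
by apply: ler_wpM2r => //; exact: frob2_ge0.
Qed.

End SmallestEigenvalue.

Section PseudoinverseProjection.
Variables (R : realType) (n r : nat) (X : 'M[R]_(n, r)) (Xd : 'M[R]_(r, n)).
Variable s : R.
Hypotheses (pinvX : is_pinv X Xd) (s_ge0 : 0 <= s).
Hypothesis sigmaX : forall v : 'rV_r, s * frob2 v <= frob2 (v *m X^T).

Let P := X *m Xd.

Lemma pinv_orthoproj : orthoproj P.
Proof. by case: pinvX => _ XdXXd PT _; split=> //; rewrite -mulmxA (mulmxA Xd) XdXXd. Qed.

Lemma pinv_projK : P *m X = X.
Proof. by case: pinvX. Qed.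

Lemma sigma_frob2 m (W : 'M[R]_(m, r)) : s * frob2 W <= frob2 (W *m X^T).
Proof.
rewrite !(frob2_rows (W *m _)) frob2_rows mulr_sumr.
by apply: ler_sum => i _; rewrite row_mul.
Qed.

Lemma sigma_frob2_pinv m (W : 'M[R]_(m, n)) : s * frob2 (W *m P) <= frob2 (W *m X).
Proof.
have [PT _] := pinv_orthoproj.
set C := W *m Xd^T.
have WP : W *m P = C *m X^T by rewrite /C -mulmxA -trmx_mul PT.
have WX : W *m X = C *m (X^T *m X) by rewrite mulmxA -WP -mulmxA pinv_projK.
set G := C *m (X^T *m X) in WX *.
have GC : frob2 (C *m X^T) = frobdot G C.
  by rewrite /G /frob2 /frobdot trmx_mul trmxK !mulmxA.
have := sigma_frob2 C; have := frob2_ge0 (G - s *: C).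
rewrite WP WX GC frob2B frobdotZr frob2Z frobdotC.
move=> h1 h2; have : 0 <= s * (frobdot C G - s * frob2 C) by rewrite mulr_ge0 // subr_ge0.
nra.
Qed.

Lemma sqr_sigma_mxtrace_pinv : s ^+ 2 * \tr P = s ^+ 2 * r%:R.
Proof.
have [->|s_neq0] := eqVneq s 0; first by rewrite expr0n !mul0r.
have s_gt0 : 0 < s by rewrite lt_def s_neq0.
have XT_free : row_free X^T.
  apply: inj_row_free => v vX0; apply/eqP; rewrite -frob2_eq0 eq_le frob2_ge0 andbT.
  by have := sigmaX v; rewrite vX0 frob20 (pmulr_rle0 _ s_gt0).
have XdX : Xd *m X = 1%:M.
  apply: trmx_inj; apply: (row_free_inj XT_free).
  by rewrite -!trmx_mul mulmxA pinv_projK mulmx1.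
by rewrite /P mxtrace_mulC XdX mxtrace1.
Qed.

Variables (Z : 'M[R]_(n, r)) (Pi : 'M[R]_n).
Hypotheses (Pi_proj : orthoproj Pi) (PiZ : Pi *m Z = Z).

Let Q := 1%:M - P.
Let D := X *m X^T - Z *m Z^T.

Lemma gram_orthoproj : Z *m Z^T *m Pi = Z *m Z^T.
Proof. by have [PiT _] := Pi_proj; rewrite -mulmxA -PiT -trmx_mul PiZ. Qed.

Lemma sqr_sigma_frob2_le : s ^+ 2 * frob2 ((1%:M - Pi) *m P) <= frob2 (P *m D).
Proof.
have [PcT PcPc] := orthoprojC Pi_proj; set Pc := 1%:M - Pi in PcT PcPc *.
have PDPc : P *m D *m Pc = X *m X^T *m Pc.
  have ZZPc : Z *m Z^T *m Pc = 0 by rewrite mulmxBr mulmx1 gram_orthoproj subrr.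
  rewrite (mulmxBr P) mulmxA pinv_projK mulmxBl -(mulmxA P _ Pc) ZZPc.
  by rewrite mulmx0 subr0.
have proj_le : frob2 (X *m X^T *m Pc) <= frob2 (P *m D).
  rewrite (frob2_orthoprojr (P *m D) (orthoprojC Pi_proj)) -/Pc PDPc lerDl.
  exact: frob2_ge0.
have tr_eq : frob2 (X *m X^T *m Pc) = frob2 (Pc *m X *m X^T).
  by rewrite -frob2_tr !trmx_mul trmxK PcT mulmxA.
apply: le_trans proj_le; rewrite tr_eq expr2 -mulrA.
apply: le_trans (sigma_frob2 _); apply: ler_wpM2l => //.
exact: sigma_frob2_pinv.
Qed.

Let Zp := Q *m Z.
Let M := Zp *m Zp^T.

Lemma frob2_residual_ge (lam : R) : 0 <= lam <= 1 ->
  frob2 M + s ^+ 2 * (r%:R - \tr Pi) + 2 * lam * s * \tr M - lam ^+ 2 * frob2 M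
  <= frob2 D.
Proof.
move=> /andP[lam_ge0 lam_le1].
have P_proj := pinv_orthoproj; have Q_proj := orthoprojC P_proj.
have [[PT _] [QT _]] := (P_proj, Q_proj).
set ZZ := Z *m Z^T.
have ME : M = Q *m ZZ *m Q by rewrite /M /Zp trmx_mul QT !mulmxA.
have D_split : frob2 D = frob2 (P *m D) + frob2 (Q *m ZZ).
  have QD : Q *m D = - (Q *m ZZ).
    by rewrite /D mulmxBr mulmxA /Q mulmxBl mul1mx pinv_projK subrr mul0mx sub0r.
  by rewrite (frob2_orthoprojl D P_proj) -/Q QD frob2N.
have M_le : frob2 M <= frob2 (Q *m ZZ).
  by rewrite (frob2_orthoprojr (Q *m ZZ) P_proj) -/Q ME lerDr frob2_ge0.
have cross :
    2 * (s * lam * \tr M) <= s ^+ 2 * frob2 (Q *m Pi) + lam ^+ 2 * frob2 (Q *m ZZ).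
  have trM : frobdot (Q *m Pi) (Q *m ZZ) = \tr M.
    by rewrite ME /frobdot trmx_mul QT trmx_mul trmxK !mulmxA -(mulmxA Q Pi) PiZ.
  have := frobdot_le (s *: (Q *m Pi)) (lam *: (Q *m ZZ)).
  by rewrite frobdotZl frobdotZr trM !frob2Z -mulrA.
have tr_diff : frob2 ((1%:M - Pi) *m P) - frob2 (Q *m Pi) = \tr P - \tr Pi.
  rewrite !frob2_orthoprojM //; last exact: orthoprojC.
  by rewrite !mulmxBl !mul1mx !raddfB /= (mxtrace_mulC Pi); ring.
have sq := sqr_sigma_frob2_le.
have lam2 : 0 <= (1 - lam ^+ 2) * (frob2 (Q *m ZZ) - frob2 M).
  by apply: mulr_ge0; rewrite subr_ge0 // expr_le1.
have := sqr_sigma_mxtrace_pinv; rewrite D_split; nra.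
Qed.

End PseudoinverseProjection.

Section AlphaBeta.
Variable R : rcfType.

Lemma alpha_beta_bound (a b q : R) : 0 <= a -> 0 <= b -> 1 <= q ->
    (forall lam, 0 <= lam <= 1 ->
       a ^+ 2 * (1 - lam ^+ 2) + 2 * lam * a * b + (q - 1) * b ^+ 2 <= 1) ->
  (b <= a -> a ^+ 2 + q * b ^+ 2 <= 1) /\ (a <= b -> a <= 1 / Num.sqrt (1 + q)).
Proof.
move=> a_ge0 b_ge0 q_ge1 H; split => [b_le_a | a_le_b].
  have [a0|a_neq0] := eqVneq a 0.
    have b0 : b = 0 by apply/eqP; rewrite eq_le b_ge0 -a0 b_le_a.
    by rewrite a0 b0 expr0n mulr0 addr0 ler01.
  have a_gt0 : 0 < a by rewrite lt_def a_neq0.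
  have := H (b / a); rewrite divr_ge0 // ler_pdivrMr // mul1r b_le_a => /(_ isT).
  suff -> : a ^+ 2 * (1 - (b / a) ^+ 2) + 2 * (b / a) * a * b + (q - 1) * b ^+ 2
    = a ^+ 2 + q * b ^+ 2 by [].
  by field.
have H1 : 2 * a * b + (q - 1) * b ^+ 2 <= 1.
  by have := H 1; rewrite ler01 lexx expr1n subrr mulr0 add0r mulr1; apply.
have k_gt0 : 0 < Num.sqrt (1 + q) by rewrite sqrtr_gt0; lra.
rewrite ler_pdivlMr // -(@expr_le1 _ 2) ?mulr_ge0 ?sqrtr_ge0 //.
rewrite exprMn sqr_sqrtr; last by lra.
have : 0 <= a * (b - a) by rewrite mulr_ge0 // subr_ge0.
have : 0 <= (q - 1) * (b ^+ 2 - a ^+ 2).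
  by rewrite mulr_ge0 ?subr_ge0 // ler_sqr ?nnegrE.
nra.
Qed.

Lemma alpha_beta_of_residual_bound (m2 d2 s t rk rr : R) :
    0 < m2 -> 0 < d2 -> 0 <= s -> 0 <= t -> 0 < rk <= rr -> t ^+ 2 <= rk * m2 ->
    (forall lam, 0 <= lam <= 1 ->
       m2 + s ^+ 2 * (rr - rk) + 2 * lam * s * t - lam ^+ 2 * m2 <= d2) ->
  let a := Num.sqrt m2 / Num.sqrt d2 in
  let b := s / Num.sqrt d2 * (t / Num.sqrt m2) in
  (b <= a -> a ^+ 2 + rr / rk * b ^+ 2 <= 1) /\
  (a <= b -> a <= 1 / Num.sqrt (1 + rr / rk)).
Proof.
move=> m2_gt0 d2_gt0 s_ge0 t_ge0 /andP[rk_gt0 rk_le_rr] t_le H a b.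
rewrite -(sqr_sqrtr (ltW m2_gt0)) -(sqr_sqrtr (ltW d2_gt0)) in t_le H.
have := sqrtr_gt0 m2; have := sqrtr_gt0 d2; rewrite m2_gt0 d2_gt0.
move: t_le H; rewrite /a /b; clear a b.
move: (Num.sqrt m2) (Num.sqrt d2) => m d t_le H d_gt0 m_gt0.
have [u tE] : exists u, t = u * m by exists (t / m); rewrite divfK ?gt_eqF.
rewrite tE exprMn ler_pM2r ?exprn_gt0 // in t_le.
have u_ge0 : 0 <= u by rewrite -(pmulr_lge0 _ m_gt0) -tE.
set q := rr / rk; have q_ge1 : 1 <= q by rewrite ler_pdivlMr // mul1r.
have rrE : rr = q * rk by rewrite divfK ?gt_eqF.
apply: alpha_beta_bound => //.
- by rewrite divr_ge0 ?ltW.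
- by rewrite tE mulfK ?gt_eqF // mulr_ge0 // divr_ge0 // ltW.
move=> lam lam01; have := H lam lam01; rewrite tE mulfK ?gt_eqF // rrE.
have -> : (m / d) ^+ 2 * (1 - lam ^+ 2) + 2 * lam * (m / d) * (s / d * u)
    + (q - 1) * (s / d * u) ^+ 2
  = (m ^+ 2 * (1 - lam ^+ 2) + 2 * lam * s * (u * m) + (q - 1) * s ^+ 2 * u ^+ 2)
    / d ^+ 2 by field; rewrite gt_eqF.
rewrite ler_pdivrMr ?exprn_gt0 // mul1r.
have : 0 <= (q - 1) * s ^+ 2 * (rk - u ^+ 2).
  by rewrite !mulr_ge0 ?sqr_ge0 // subr_ge0.
nra.
Qed.

End AlphaBeta.

Unset Implicit Arguments. Set Strict Implicit.

Theorem lemma11 (R : realType) (n r : nat) (X Z : 'M[R]_(n, r))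
    (Xd : 'M[R]_(r, n)) :
  is_pinv X Xd ->
  X *m X^T != Z *m Z^T ->
  (1 <= \rank Z)%N ->
  (\rank Z <= r)%N ->
  let Zp := (1%:M - X *m Xd) *m Z in
  let a := alpha_of X Z Zp in
  let b := beta_of X Z Zp in
  let rs := (r%:R / (\rank Z)%:R : R) in
  (b <= a -> a ^+ 2 + rs * b ^+ 2 <= 1) /\
  (a <= b -> a <= 1 / Num.sqrt (1 + rs)).
Proof.
move=> pinvX XZ_neq rankZ_ge1 rankZ_le Zp a b rs.
have r_gt0 : (0 < r)%N := leq_trans rankZ_ge1 rankZ_le.
have s_ge0 := sigma_min_sq_ge0 X r_gt0.
have [Pi [Pr [[Pi_proj PiZ trPi] [Pr_proj ZPr trPr]]]] := orthoprojs_col_row_spaces Z.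
have ZpPr : Zp *m Pr = Zp by rewrite -mulmxA ZPr.
have D_gt0 : 0 < frob2 (X *m X^T - Z *m Z^T) by rewrite frob2_gt0 subr_eq0.
rewrite /a /b /alpha_of /beta_of !frobE.
have [Zp0|Zp_neq0] := eqVneq Zp 0.
  rewrite Zp0 mul0mx frob20 sqrtr0 mul0r; set b0 := sigma_min_sq X / _.
  have b0_ge0 : 0 <= b0 by rewrite divr_ge0 ?sqrtr_ge0.
  split=> [b0_le0|_]; last by rewrite divr_ge0 ?sqrtr_ge0.
  by rewrite (@le_anti _ _ b0 0) ?b0_le0 // expr0n mulr0 addr0 ler01.
apply: alpha_beta_of_residual_bound => //.
- by rewrite frob2_gram_gt0.
- exact: frob2_ge0.
- by rewrite ltr0n ler_nat rankZ_ge1 rankZ_le.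
- by rewrite -trPr; apply: mxtrace_gram_sqr_le.
- move=> lam lam01; rewrite -trPi.
  exact: (frob2_residual_ge pinvX s_ge0 (sigma_min_sq_le X ^~ r_gt0) Pi_proj PiZ).
Qed.
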